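(* Let $k$ be a commutative ring, $A$ a commutative $k$-algebra, $(A,\mathfrak g_{A/k},\alpha)$ a Lie algebroid, $S^\cdot$ a noetherian graded $\mathfrak g_{A/k}$-algebra which is semi-simple over $\mathfrak g_{A/k}$ with $\bar S^0$ noetherian, and $M^\cdot$ a graded $(S^\cdot,\mathfrak g_{A/k})$-module of finite type over $S^\cdot$ which is semi-simple over $\mathfrak g_{A/k}$. Write $S^\cdot=A\bar S^\cdot\oplus Q$ with $Q$ a (semi-simple) $\mathfrak g_{A/k}$-submodule of $S^\cdot$, and $M^\cdot=A\bar M^\cdot\oplus M_1$ with $M_1$ a $\mathfrak g_{A/k}$-submodule of $M^\cdot$. Then $Q\cdot\bar M^\cdot\subset M_1$.
   Context: A Lie algebroid $(A,\mathfrak g_{A/k},\alpha)$: an $A$-module of finite type $\mathfrak g_{A/k}$ with a $k$-bilinear Lie bracket and a map $\alpha:\mathfrak g_{A/k}\to T_{A/k}$ (the $k$-derivations of $A$) which is a homomorphism of Lie algebras and $A$-modules, with $[\delta,a\eta]=\alpha(\delta)(a)\eta+a[\delta,\eta]$. A $\mathfrak g_{A/k}$-module is an $A$-module $M$ with a $k$-Lie algebra homomorphism $f:\mathfrak g_{A/k}\to\mathrm{End}_k(M)$ satisfying $f(a\delta)(m)=af(\delta)(m)$ and $f(\delta)(am)=\alpha(\delta)(a)m+af(\delta)(m)$; semi-simple means a direct sum of simple $\mathfrak g_{A/k}$-modules. A graded $\mathfrak g_{A/k}$-algebra is a graded commutative $A$-algebra $S^\cdot=\bigoplus_{i\ge0}S^i$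 which is a $\mathfrak g_{A/k}$-module via an $A$-linear Lie algebra homomorphism $\phi:\mathfrak g_{A/k}\to T_{S^\cdot/k}$ preserving each $S^i$. A graded $(S^\cdot,\mathfrak g_{A/k})$-module is a graded $S^\cdot$-module $M^\cdot=\bigoplus_{i\in\mathbb Z}M^i$ which is a $\mathfrak g_{A/k}$-module with $\delta M^i\subset M^i$ and $\delta(sm)=\delta(s)m+s\,\delta m$. Bars denote invariants: $\bar M^\cdot=\{m:\delta m=0\ \forall\delta\in\mathfrak g_{A/k}\}$, similarly $\bar S^\cdot$; $A\bar S^\cdot$ and $A\bar M^\cdot$ are the $A$-submodules they generate, which are $\mathfrak g_{A/k}$-submodules. *)

From HB Require Import structures.
From mathcomp Require Import all_boot all_algebra.
Set Implicit Arguments. Unset Strict Implicit. Unset Printing Implicit Defensive.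
Import GRing.Theory.
Local Open Scope ring_scope.

(* Conventions: all modules are given by a carrier (zmod/lmod type) together
   with an explicit scalar action; submodules / gradings are Prop-valued
   predicates on the carrier. *)

Definition finite_type (R : Type) (V : nmodType) (sc : R -> V -> V) : Prop :=
  exists (n : nat) (gens : 'I_n -> V),
    forall v, exists c : 'I_n -> R, v = \sum_(i < n) sc (c i) (gens i).

Definition internal_direct_sum (I : eqType) (V : zmodType) (D : I -> V -> Prop) : Prop :=
  [/\ forall i, D i 0,
      forall i x y, D i x -> D i y -> D i (x - y),
      forall v, exists (s : seq I) (h : I -> V),
         [/\ uniq s, forall i, i \in s -> D i (h i) & v = \sum_(i <- s) h i] &
      forall (s : seq I) (h : I -> V), uniq s -> (forall i, i \in s -> D i (h i)) ->
         \sum_(i <- s) h i = 0 -> forall i, i \in s -> h i = 0 ].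

Definition direct_sum2 (V : zmodType) (P Q : V -> Prop) : Prop :=
  (forall x, exists p q, [/\ P p, Q q & x = p + q]) /\
  (forall x, P x -> Q x -> x = 0).

(* Noetherianity of the subring P of R: every ideal of P is finitely generated.
   With P = (fun _ => True) this is noetherianity of R. *)
Definition noetherian_on (R : comPzRingType) (P : R -> Prop) : Prop :=
  forall I : R -> Prop,
    (forall x, I x -> P x) -> I 0 ->
    (forall x y, I x -> I y -> I (x + y)) ->
    (forall r x, P r -> I x -> I (r * x)) ->
    exists (n : nat) (gens : 'I_n -> R),
      (forall i, I (gens i)) /\
      forall x, I x -> exists c : 'I_n -> R,
          (forall i, P (c i)) /\ x = \sum_(i < n) c i * gens i.

Section LieAlgebroid.
Variables (k : comPzRingType) (A : comAlgType k).

Definition kderivation (V : comPzRingType) (ksc : k -> V -> V) (D : V -> V) : Prop :=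
  [/\ forall x y, D (x + y) = D x + D y,
      forall c x, D (ksc c x) = ksc c (D x) &
      forall x y, D (x * y) = D x * y + x * D y].

Record lie_algebroid (g : lmodType A) (br : g -> g -> g) (alpha : g -> A -> A) : Prop := {
  la_finite : finite_type ( *:%R : A -> g -> g);
  la_addl : forall x y z, br (x + y) z = br x z + br y z;
  la_addr : forall x y z, br x (y + z) = br x y + br x z;
  la_scalel : forall (c : k) x y, br ((c%:A) *: x) y = (c%:A) *: br x y;
  la_scaler : forall (c : k) x y, br x ((c%:A) *: y) = (c%:A) *: br x y;
  la_alt : forall x, br x x = 0;
  la_jacobi : forall x y z, br x (br y z) + br y (br z x) + br z (br x y) = 0;
  la_der : forall d, kderivation ( *:%R : k -> A -> A) (alpha d);
  la_alpha_add : forall d e b, alpha (d + e) b = alpha d b + alpha e b;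
  la_alpha_scale : forall a d b, alpha (a *: d) b = a * alpha d b;
  la_alpha_br : forall d e b, alpha (br d e) b = alpha d (alpha e b) - alpha e (alpha d b);
  la_leibniz : forall d a e, br d (a *: e) = alpha d a *: e + a *: br d e
}.

Variables (g : lmodType A) (br : g -> g -> g) (alpha : g -> A -> A).

Record gmodule (V : zmodType) (sc : A -> V -> V) (f : g -> V -> V) : Prop := {
  gm_add : forall d x y, f d (x + y) = f d x + f d y;
  gm_addg : forall d e x, f (d + e) x = f d x + f e x;
  gm_scaleg : forall a d x, f (a *: d) x = sc a (f d x);
  gm_br : forall d e x, f (br d e) x = f d (f e x) - f e (f d x);
  gm_leibniz : forall d a x, f d (sc a x) = sc (alpha d a) x + sc a (f d x)
}.

End LieAlgebroid.

Section Submodules.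
Variables (A : pzRingType) (g : Type) (V : zmodType) (sc : A -> V -> V) (f : g -> V -> V).

Definition gsubmodule (W : V -> Prop) : Prop :=
  [/\ W 0, forall x y, W x -> W y -> W (x + y),
      forall a x, W x -> W (sc a x) & forall d x, W x -> W (f d x)].

Definition gsimple (W : V -> Prop) : Prop :=
  [/\ gsubmodule W, exists2 w, W w & w != 0 &
      forall W' : V -> Prop, gsubmodule W' -> (forall x, W' x -> W x) ->
        (forall x, W' x -> x = 0) \/ (forall x, W x -> W' x)].

Definition gsemisimple : Prop :=
  exists (I : eqType) (W : I -> V -> Prop),
    (forall i, gsimple (W i)) /\ internal_direct_sum W.

Definition ginvariant (x : V) : Prop := forall d, f d x = 0.

(* A \bar V : the A-submodule generated by the invariants. *)
Definition span_invariants (x : V) : Prop :=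
  exists (n : nat) (a : 'I_n -> A) (v : 'I_n -> V),
    (forall i, ginvariant (v i)) /\ x = \sum_(i < n) sc (a i) (v i).

End Submodules.

Section Graded.
Variables (k : comPzRingType) (A : comAlgType k) (g : lmodType A)
  (br : g -> g -> g) (alpha : g -> A -> A).

Record graded_galgebra (S : comAlgType A) (Sdeg : nat -> S -> Prop) (phi : g -> S -> S) : Prop := {
  ga_graded : internal_direct_sum (Sdeg : nat -> S -> Prop);
  ga_Amod : forall i a x, Sdeg i x -> Sdeg i (a *: x);
  ga_mul : forall i j x y, Sdeg i x -> Sdeg j y -> Sdeg (i + j)%N (x * y);
  ga_gmod : gmodule br alpha ( *:%R : A -> S -> S) phi;
  ga_der : forall d, kderivation (fun (c : k) (s : S) => ((c%:A : A) *: s)) (phi d);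
  ga_pres : forall d i x, Sdeg i x -> Sdeg i (phi d x)
}.

Definition ascale (S : comAlgType A) (M : lmodType S) (a : A) (m : M) : M := (a%:A : S) *: m.

Record graded_gmodule (S : comAlgType A) (Sdeg : nat -> S -> Prop) (phi : g -> S -> S)
    (M : lmodType S) (Mdeg : int -> M -> Prop) (rho : g -> M -> M) : Prop := {
  gmm_graded : internal_direct_sum (Mdeg : int -> M -> Prop);
  gmm_Amod : forall i a m, Mdeg i m -> Mdeg i (ascale a m);
  gmm_mul : forall (i : nat) (j : int) s m, Sdeg i s -> Mdeg j m -> Mdeg (i%:Z + j) (s *: m);
  gmm_gmod : gmodule br alpha (@ascale S M) rho;
  gmm_pres : forall d i m, Mdeg i m -> Mdeg i (rho d m);
  gmm_leibniz : forall d s m, rho d (s *: m) = phi d s *: m + s *: rho d m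
}.

End Graded.

From HB Require Import structures.
From mathcomp Require Import all_boot all_algebra.
From Stdlib Require Import IndefiniteDescription.
Set Implicit Arguments. Unset Strict Implicit. Unset Printing Implicit Defensive.
Import GRing.Theory.
Local Open Scope ring_scope.

(* A Schur-type argument.  For an invariant m, the map F : s |-> pi (pr_Q s * m),
   with pi the projection of M onto A.Mbar along M1 and pr_Q the projection of S
   onto Q along A.Sbar, is a g-morphism from S into A.Mbar that kills the
   invariants of S.  On a simple summand W of S, a nonzero F composed with the
   coordinate onto a simple summand U of M would be an isomorphism W ~ U; since
   its image lies in A.Mbar, U contains a nonzero invariant, whose preimage is a
   nonzero invariant of W, which F kills: a contradiction.  Hence F = 0, and for
   q in Q this says pi (q m) = 0, i.e. q m lies in M1. *)

Section AdditiveFun.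
Variables (V W : zmodType) (T : V -> W).
Hypothesis T_add : {morph T : x y / x + y}.

Lemma additive0 : T 0 = 0.
Proof. by apply: (addrI (T 0)); rewrite -T_add !addr0. Qed.

Lemma additiveB x y : T (x - y) = T x - T y.
Proof. by apply: (addIr (T y)); rewrite -T_add !subrK. Qed.

Lemma additive_sum (I : Type) (r : seq I) (F : I -> V) :
  T (\sum_(i <- r) F i) = \sum_(i <- r) T (F i).
Proof. exact: (big_morph T T_add additive0). Qed.

End AdditiveFun.

Lemma sumr_neq0 (V : nmodType) (I : eqType) (r : seq I) (F : I -> V) :
  \sum_(i <- r) F i != 0 -> exists2 i, i \in r & F i != 0.
Proof.
move=> nz; have /hasP[i ir Fi] : has (fun i => F i != 0) r; last by exists i.
apply: contraNT nz => /hasPn F0; apply/eqP/big1_seq => i /andP[_ /F0].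
by rewrite negbK => /eqP.
Qed.

Lemma sum_if_mem_subset (I : eqType) (V : nmodType) (s t : seq I) (h : I -> V) :
  uniq s -> uniq t -> {subset s <= t} ->
  \sum_(i <- t) (if i \in s then h i else 0) = \sum_(i <- s) h i.
Proof.
move=> us ut st; rewrite -big_mkcond -big_filter; apply: perm_big.
apply: uniq_perm => [||x]; first exact: filter_uniq.
- exact: us.
- by rewrite mem_filter; case xs: (x \in s) => //=; rewrite st.
Qed.

Lemma closed_subD (V : zmodType) (P : V -> Prop) :
  P 0 -> (forall x y, P x -> P y -> P (x - y)) -> forall x y, P x -> P y -> P (x + y).
Proof.
move=> P0 PB x y Px Py; rewrite -[y]opprK -[- y]sub0r.
by apply: (PB) => //; apply: PB.
Qed.

Lemma direct_sum2C (V : zmodType) (P Q : V -> Prop) :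
  direct_sum2 P Q -> direct_sum2 Q P.
Proof.
case=> dec triv; split=> [x|x Qx Px]; last exact: triv.
by have [p [q [Pp Qq ->]]] := dec x; exists q, p; rewrite addrC.
Qed.

Section DirectSum2.
Variables (V : zmodType) (P Q : V -> Prop).
Hypothesis PQ : direct_sum2 P Q.

Definition dsproj (x : V) : V :=
  proj1_sig (constructive_indefinite_description _ (proj1 PQ x)).

Lemma dsprojP x : P (dsproj x) /\ Q (x - dsproj x).
Proof.
rewrite /dsproj; case: constructive_indefinite_description => p /= [q [Pp Qq ->]].
by split=> //; rewrite addrC addKr.
Qed.

Hypotheses (P0 : P 0) (PB : forall x y, P x -> P y -> P (x - y))
  (Q0 : Q 0) (QB : forall x y, Q x -> Q y -> Q (x - y)).

Lemma dsproj_uniq x p : P p -> Q (x - p) -> dsproj x = p.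
Proof.
move=> Pp Qxp; have [Pr Qr] := dsprojP x.
apply/eqP; rewrite -subr_eq0; apply/eqP/(proj2 PQ); first exact: PB.
have -> : dsproj x - p = (x - p) - (x - dsproj x).
  by rewrite opprB (addrC (x - p)) addrA subrK.
exact: QB.
Qed.

Lemma dsprojD : {morph dsproj : x y / x + y}.
Proof.
move=> x y; have [Px Qx] := dsprojP x; have [Py Qy] := dsprojP y.
apply: dsproj_uniq; first exact: closed_subD.
by rewrite opprD addrACA; apply: closed_subD.
Qed.

Lemma dsproj_id x : P x -> dsproj x = x.
Proof. by move=> Px; apply: dsproj_uniq; rewrite ?subrr. Qed.

Lemma dsproj_eq0 x : Q x -> dsproj x = 0.
Proof. by move=> Qx; apply: dsproj_uniq; rewrite ?subr0. Qed.

Lemma dsproj_comm (T : V -> V) : {morph T : x y / x + y} ->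
  (forall x, P x -> P (T x)) -> (forall x, Q x -> Q (T x)) ->
  forall x, dsproj (T x) = T (dsproj x).
Proof.
move=> T_add TP TQ x; have [Px Qx] := dsprojP x.
by apply: dsproj_uniq; rewrite -?additiveB //; [apply: TP | apply: TQ].
Qed.

End DirectSum2.

Section InternalDirectSum.
Variables (I : eqType) (V : zmodType) (D : I -> V -> Prop).
Hypothesis HD : internal_direct_sum D.

Let D0 i : D i 0. Proof. by case: HD. Qed.
Let DB i x y : D i x -> D i y -> D i (x - y). Proof. by case: HD => _ DB _ _; apply: DB. Qed.
Let DD i : forall x y, D i x -> D i y -> D i (x + y).
Proof. exact: closed_subD (D0 i) (DB (i:=i)). Qed.

Lemma internal_direct_sum_components_eq (s s' : seq I) (h h' : I -> V) :
  uniq s -> (forall i, i \in s -> D i (h i)) ->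
  uniq s' -> (forall i, i \in s' -> D i (h' i)) ->
  \sum_(i <- s) h i = \sum_(i <- s') h' i ->
  forall j, (if j \in s then h j else 0) = (if j \in s' then h' j else 0).
Proof.
move=> us Ds us' Ds' E j; pose t := undup (s ++ s').
have ut : uniq t := undup_uniq _.
have st : {subset s <= t} by move=> x xs; rewrite mem_undup mem_cat xs.
have st' : {subset s' <= t} by move=> x xs; rewrite mem_undup mem_cat xs orbT.
pose dh i := (if i \in s then h i else 0) - (if i \in s' then h' i else 0).
have Ddh i : D i (dh i).
  by apply: DB; [case: ifP => [/Ds|_] | case: ifP => [/Ds'|_]] => //; apply: D0.
have sum_dh : \sum_(i <- t) dh i = 0 by rewrite sumrB !sum_if_mem_subset // E subrr.
case jt: (j \in t).
  apply/eqP; rewrite -subr_eq0; apply/eqP.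
  by case: HD => _ _ _ /(_ t dh ut (fun i _ => Ddh i) sum_dh j jt).
by rewrite (contraFF (@st j)) ?(contraFF (@st' j)).
Qed.

Lemma decomposition_exists x : exists sh : seq I * (I -> V),
  [/\ uniq sh.1, forall i, i \in sh.1 -> D i (sh.2 i) & x = \sum_(i <- sh.1) sh.2 i].
Proof. by case: HD => _ _ /(_ x) [s [h dec]] _; exists (s, h). Qed.

Definition dscoord (j : I) (x : V) : V :=
  let sh := proj1_sig (constructive_indefinite_description _ (decomposition_exists x)) in
  if j \in sh.1 then sh.2 j else 0.

Lemma dscoordE x s h : uniq s -> (forall i, i \in s -> D i (h i)) ->
  x = \sum_(i <- s) h i -> forall j, dscoord j x = if j \in s then h j else 0.
Proof.
move=> us Ds Ex j; rewrite /dscoord.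
case: constructive_indefinite_description => -[s' h'] /= [us' Ds' Ex'].
by apply: internal_direct_sum_components_eq => //; rewrite -Ex'.
Qed.

Lemma dscoordP j x : D j (dscoord j x).
Proof.
rewrite /dscoord; case: constructive_indefinite_description => -[s h] /= [_ Ds _].
by case: ifP => [/Ds|].
Qed.

Lemma dscoord_cover x : exists2 s, uniq s & forall t, uniq t -> {subset s <= t} ->
  x = \sum_(i <- t) dscoord i x /\ forall j, j \notin t -> dscoord j x = 0.
Proof.
have [[s h] [us Ds Ex]] := decomposition_exists x.
have cE := dscoordE us Ds Ex; exists s => // t ut st; split.
  by rewrite (eq_bigr _ (fun i _ => cE i)) sum_if_mem_subset.
by move=> j jt; rewrite cE (contraNF (@st j)).
Qed.

Lemma dscoordD j : {morph dscoord j : x y / x + y}.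
Proof.
move=> x y; have [s us covx] := dscoord_cover x; have [s' us' covy] := dscoord_cover y.
pose t := undup (s ++ s'); have ut : uniq t := undup_uniq _.
have [Ex x0] : x = \sum_(i <- t) dscoord i x /\ forall j, j \notin t -> dscoord j x = 0.
  by apply: covx => // i si; rewrite mem_undup mem_cat si.
have [Ey y0] : y = \sum_(i <- t) dscoord i y /\ forall j, j \notin t -> dscoord j y = 0.
  by apply: covy => // i si; rewrite mem_undup mem_cat si orbT.
rewrite (@dscoordE (x + y) t (fun i => dscoord i x + dscoord i y)) //.
- by case: ifP => // /negbT jt; rewrite x0 ?y0 ?addr0.
- by move=> i _; apply: DD; apply: dscoordP.
- by rewrite big_split -Ex -Ey.
Qed.

Lemma dscoord_comm (T : V -> V) : {morph T : x y / x + y} ->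
  (forall i x, D i x -> D i (T x)) -> forall j x, dscoord j (T x) = T (dscoord j x).
Proof.
move=> T_add TD j x; have [s us covx] := dscoord_cover x.
have [Ex x0] := covx s us (fun i si => si).
rewrite (@dscoordE (T x) s (fun i => T (dscoord i x))) //.
- by case: ifP => // /negbT js; rewrite x0 // (additive0 T_add).
- by move=> i _; apply/TD/dscoordP.
- by rewrite {1}Ex additive_sum.
Qed.

Lemma dscoord_neq0 x : x != 0 -> exists j, dscoord j x != 0.
Proof.
have [s us covx] := dscoord_cover x; have [Ex _] := covx s us (fun i si => si).
by rewrite {1}Ex => /sumr_neq0[j _ nzj]; exists j.
Qed.

End InternalDirectSum.

Section GMorphism.
Variables (A : pzRingType) (g : Type) (V W : zmodType)
  (scV : A -> V -> V) (fV : g -> V -> V) (scW : A -> W -> W) (fW : g -> W -> W).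

Definition gmorphism (G : V -> W) : Prop :=
  [/\ {morph G : x y / x + y}, forall a x, G (scV a x) = scW a (G x)
    & forall d x, G (fV d x) = fW d (G x)].

Lemma gsubmodule_image (U : V -> Prop) (G : V -> W) :
  gsubmodule scV fV U -> gmorphism G -> gsubmodule scW fW (fun y => exists2 x, U x & G x = y).
Proof.
case=> U0 UD UZ UF [G_add G_sc G_f]; split.
- by exists 0 => //; apply: additive0.
- by move=> _ _ [x Ux <-] [y Uy <-]; exists (x + y); [apply: UD | rewrite G_add].
- by move=> a _ [x Ux <-]; exists (scV a x); [apply: UZ | rewrite G_sc].
- by move=> d _ [x Ux <-]; exists (fV d x); [apply: UF | rewrite G_f].
Qed.

Hypotheses (scW_add : forall a, {morph scW a : x y / x + y})
  (fW_add : forall d, {morph fW d : x y / x + y}).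

Lemma gsubmodule_kernel (U : V -> Prop) (G : V -> W) :
  gsubmodule scV fV U -> gmorphism G -> gsubmodule scV fV (fun x => U x /\ G x = 0).
Proof.
case=> U0 UD UZ UF [G_add G_sc G_f]; split.
- by split; last exact: additive0.
- by move=> x y [Ux Gx] [Uy Gy]; split; [apply: UD | rewrite G_add Gx Gy addr0].
- by move=> a x [Ux Gx]; split; [apply: UZ | rewrite G_sc Gx additive0].
- by move=> d x [Ux Gx]; split; [apply: UF | rewrite G_f Gx additive0].
Qed.

Lemma gsimple_gmorphism_inj (U : V -> Prop) (G : V -> W) :
  gsimple scV fV U -> gmorphism G -> (exists2 x, U x & G x != 0) ->
  forall x, U x -> G x = 0 -> x = 0.
Proof.
case=> subU _ minU morG [x0 Ux0 nz].
have [K0 | UK] := minU _ (gsubmodule_kernel subU morG) (fun x Kx => proj1 Kx).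
  by move=> x Ux Gx; apply: K0.
by have [_ /eqP] := UK _ Ux0; rewrite (negbTE nz).
Qed.

End GMorphism.

Lemma gsimple_gmorphism_onto (A : pzRingType) (g : Type) (V W : zmodType)
  (scV : A -> V -> V) (fV : g -> V -> V) (scW : A -> W -> W) (fW : g -> W -> W)
  (U : V -> Prop) (U' : W -> Prop) (G : V -> W) :
  gsubmodule scV fV U -> gsimple scW fW U' -> gmorphism scV fV scW fW G ->
  (forall x, U x -> U' (G x)) -> (exists2 x, U x & G x != 0) ->
  forall y, U' y -> exists2 x, U x & G x = y.
Proof.
move=> subU [_ _ minU'] morG GU [x0 Ux0 nz].
have imU' y : (exists2 x, U x & G x = y) -> U' y by case=> x Ux <-; apply: GU.
have [I0 | //] := minU' _ (gsubmodule_image subU morG) imU'.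
by case/eqP: nz; apply: I0; exists x0.
Qed.

Lemma gmorphism_comp (A : pzRingType) (g : Type) (U V W : zmodType)
  (scU : A -> U -> U) (fU : g -> U -> U) (scV : A -> V -> V) (fV : g -> V -> V)
  (scW : A -> W -> W) (fW : g -> W -> W) (G : U -> V) (H : V -> W) :
  gmorphism scU fU scV fV G -> gmorphism scV fV scW fW H ->
  gmorphism scU fU scW fW (H \o G).
Proof.
case=> G_add G_sc G_f [H_add H_sc H_f].
by split=> [x y|a x|d x] /=; rewrite ?G_add ?G_sc ?G_f ?H_add ?H_sc ?H_f.
Qed.

Section GSubmodules.
Variables (A : pzRingType) (g : Type) (V : zmodType) (sc : A -> V -> V) (f : g -> V -> V).
Hypotheses (sc_add : forall a, {morph sc a : x y / x + y})
  (f_add : forall d, {morph f d : x y / x + y}) (scN1 : forall x, sc (-1) x = - x).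

Lemma gsubmoduleB (U : V -> Prop) : gsubmodule sc f U ->
  forall x y, U x -> U y -> U (x - y).
Proof. by case=> _ UD UZ _ x y Ux Uy; apply: UD => //; rewrite -scN1; apply: UZ. Qed.

Section Projection.
Variables (P Q : V -> Prop) (PQ : direct_sum2 P Q).
Hypotheses (subP : gsubmodule sc f P) (subQ : gsubmodule sc f Q).

Let P0 : P 0. Proof. by case: subP. Qed.
Let Q0 : Q 0. Proof. by case: subQ. Qed.
Let PB := gsubmoduleB subP.
Let QB := gsubmoduleB subQ.

Lemma dsproj_gmorphism : gmorphism sc f sc f (dsproj PQ).
Proof.
have [_ _ PZ PF] := subP; have [_ _ QZ QF] := subQ.
have comm := dsproj_comm PQ PB QB.
split; first exact: dsprojD PQ P0 PB Q0 QB.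
- by move=> a; apply: comm => // x; [apply: PZ | apply: QZ].
- by move=> d; apply: comm => // x; [apply: PF | apply: QF].
Qed.

Lemma gsubmodule_dsproj_id x : P x -> dsproj PQ x = x.
Proof. exact: dsproj_id. Qed.

Lemma gsubmodule_dsproj_eq0 x : Q x -> dsproj PQ x = 0.
Proof. exact: dsproj_eq0. Qed.

End Projection.

Lemma dscoord_gmorphism (J : eqType) (Us : J -> V -> Prop) (HU : internal_direct_sum Us) j :
  (forall i, gsubmodule sc f (Us i)) -> gmorphism sc f sc f (dscoord HU j).
Proof.
move=> subUs; split; first exact: dscoordD.
- by move=> a; apply: dscoord_comm => // i x; case: (subUs i) => _ _ UZ _; apply: UZ.
- by move=> d; apply: dscoord_comm => // i x; case: (subUs i) => _ _ _ UF; apply: UF.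
Qed.

(* The components are g-morphisms, so they map invariants to invariants. *)
Lemma dscoord_span_invariants (J : eqType) (Us : J -> V -> Prop)
    (HU : internal_direct_sum Us) j y :
  (forall i, gsubmodule sc f (Us i)) -> span_invariants sc f y -> dscoord HU j y != 0 ->
  exists u, [/\ ginvariant f u, Us j u & u != 0].
Proof.
move=> subUs [n [a [v [inv_v ->]]]]; have [c_add c_sc c_f] := dscoord_gmorphism HU j subUs.
rewrite (additive_sum c_add) => /sumr_neq0[i _]; rewrite c_sc => nz.
exists (dscoord HU j (v i)); split; first by move=> d; rewrite -c_f inv_v (additive0 c_add).
  exact: dscoordP.
by apply: contraNneq nz => ->; rewrite (additive0 (sc_add _)).
Qed.

End GSubmodules.

Section SchurVanishing.
Variables (A : pzRingType) (g : Type) (V W : zmodType)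
  (scV : A -> V -> V) (fV : g -> V -> V) (scW : A -> W -> W) (fW : g -> W -> W).
Hypotheses (scW_add : forall a, {morph scW a : x y / x + y})
  (fW_add : forall d, {morph fW d : x y / x + y}).

Lemma gmorphism_simple_span_invariants_eq0 (U : V -> Prop) (J : eqType)
    (Us : J -> W -> Prop) (HU : internal_direct_sum Us) (G : V -> W) :
  gsimple scV fV U -> (forall j, gsimple scW fW (Us j)) -> gmorphism scV fV scW fW G ->
  (forall x, U x -> span_invariants scW fW (G x)) ->
  (forall x, U x -> ginvariant fV x -> G x = 0) ->
  forall x, U x -> G x = 0.
Proof.
move=> simU simUs morG spanG invG x Ux; apply/eqP/negPn/negP => nzGx.
have [subU _ _] := simU; have subUs j : gsubmodule scW fW (Us j) by case: (simUs j).
have [j nzj] := dscoord_neq0 HU nzGx.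
have morH := gmorphism_comp morG (dscoord_gmorphism scW_add fW_add HU j subUs).
have nzH : exists2 y, U y & (dscoord HU j \o G) y != 0 by exists x.
have [u [inv_u Uj_u nz_u]] := dscoord_span_invariants scW_add fW_add subUs (spanG x Ux) nzj.
have [w Uw Hw] := gsimple_gmorphism_onto subU (simUs j) morH
  (fun y _ => dscoordP HU j (G y)) nzH Uj_u.
have inv_w : ginvariant fV w.
  move=> d; apply: (gsimple_gmorphism_inj scW_add fW_add simU morH nzH).
    by case: subU => _ _ _ UF; apply: UF.
  by have [_ _ ->] := morH; rewrite Hw inv_u.
move: nz_u; rewrite -Hw /= invG //.
have [c_add _ _] := dscoord_gmorphism scW_add fW_add HU j subUs.
by rewrite (additive0 c_add) eqxx.
Qed.

End SchurVanishing.

Section SpanInvariants.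
Variables (k : comPzRingType) (A : comAlgType k) (g : lmodType A)
  (br : g -> g -> g) (alpha : g -> A -> A)
  (V : zmodType) (sc : A -> V -> V) (f : g -> V -> V).
Hypotheses (gmodV : gmodule br alpha sc f)
  (sc_add : forall a, {morph sc a : x y / x + y})
  (sc_mul : forall a b x, sc a (sc b x) = sc (a * b) x).

Lemma span_invariants_gsubmodule : gsubmodule sc f (span_invariants sc f).
Proof.
have f_add := gm_add gmodV; split.
- exists 0%N, (fun _ => 0), (fun _ => 0); split; last by rewrite big_ord0.
  by move=> _ d; apply: additive0 (f_add d).
- move=> _ _ [n [a [v [inv_v ->]]]] [n' [a' [v' [inv_v' ->]]]].
  exists (n + n')%N, (fun i => match split i with inl j => a j | inr j => a' j end),
    (fun i => match split i with inl j => v j | inr j => v' j end); split.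
    by move=> i; case: (split i).
  by rewrite big_split_ord /=; congr (_ + _); apply: eq_bigr => i _;
    rewrite ?(unsplitK (inl i)) ?(unsplitK (inr i)).
- move=> c _ [n [a [v [inv_v ->]]]]; exists n, (fun i => c * a i), v; split => //.
  by rewrite (additive_sum (sc_add c)); apply: eq_bigr => i _; apply: sc_mul.
- move=> d _ [n [a [v [inv_v ->]]]]; exists n, (fun i => alpha d (a i)), v; split => //.
  rewrite (additive_sum (f_add d)); apply: eq_bigr => i _.
  by rewrite (gm_leibniz gmodV) inv_v (additive0 (sc_add _)) addr0.
Qed.

Lemma ginvariant_span (sc1 : forall x, sc 1 x = x) x :
  ginvariant f x -> span_invariants sc f x.
Proof. by move=> inv_x; exists 1%N, (fun _ => 1), (fun _ => x); rewrite big_ord1 sc1. Qed.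

End SpanInvariants.

Section AScale.
Variables (k : comPzRingType) (A : comAlgType k) (S : comAlgType A) (M : lmodType S).

Lemma ascaleDr (a : A) : {morph @ascale k A S M a : x y / x + y}.
Proof. by move=> x y; rewrite /ascale scalerDr. Qed.

Lemma ascaleA (a b : A) (x : M) : ascale a (ascale b x) = ascale (a * b) x.
Proof. by rewrite /ascale scalerA -scalerAl mul1r scalerA. Qed.

Lemma ascaleN1 (x : M) : ascale (-1 : A) x = - x.
Proof. by rewrite /ascale !scaleN1r. Qed.

End AScale.

Section ComplementTimesInvariant.
Variables (k : comPzRingType) (A : comAlgType k) (g : lmodType A)
  (br : g -> g -> g) (alpha : g -> A -> A)
  (S : comAlgType A) (phi : g -> S -> S) (M : lmodType S) (rho : g -> M -> M)
  (Q : S -> Prop) (M1 : M -> Prop).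
Hypotheses (gmodS : gmodule br alpha ( *:%R : A -> S -> S) phi)
  (gmodM : gmodule br alpha (@ascale k A S M) rho)
  (rho_leibniz : forall d s m, rho d (s *: m) = phi d s *: m + s *: rho d m)
  (subQ : gsubmodule ( *:%R : A -> S -> S) phi Q)
  (SQ : direct_sum2 (span_invariants ( *:%R : A -> S -> S) phi) Q)
  (subM1 : gsubmodule (@ascale k A S M) rho M1)
  (MM1 : direct_sum2 (span_invariants (@ascale k A S M) rho) M1).
Variable m : M.
Hypothesis inv_m : ginvariant rho m.

Let spanS := span_invariants_gsubmodule gmodS (@scalerDr _ _) (@scalerA _ _).
Let spanM := span_invariants_gsubmodule gmodM (@ascaleDr _ _ _ _) (@ascaleA _ _ _ _).
Let prQ := dsproj (direct_sum2C SQ).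
Let pi := dsproj MM1.
Let F (s : S) : M := pi (prQ s *: m).

Lemma scale_invariant_gmorphism :
  gmorphism ( *:%R : A -> S -> S) phi (@ascale k A S M) rho (fun s => s *: m).
Proof.
split=> [x y|a x|d x]; first exact: scalerDl.
  by rewrite /ascale scalerA mulr_algl.
by rewrite rho_leibniz inv_m scaler0 addr0.
Qed.

Let prQ_gmorphism := dsproj_gmorphism (@scalerDr _ _) (gm_add gmodS) (@scaleN1r _ _)
  (direct_sum2C SQ) subQ spanS.
Let pi_gmorphism := dsproj_gmorphism (@ascaleDr _ _ _ _) (gm_add gmodM) (@ascaleN1 _ _ _ _)
  MM1 spanM subM1.

Lemma F_gmorphism : gmorphism ( *:%R : A -> S -> S) phi (@ascale k A S M) rho F.
Proof.
exact: gmorphism_comp (gmorphism_comp prQ_gmorphism scale_invariant_gmorphism) pi_gmorphism.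
Qed.

Lemma F_span s : span_invariants (@ascale k A S M) rho (F s).
Proof. exact: (dsprojP MM1 _).1. Qed.

Lemma F_invariant s : ginvariant phi s -> F s = 0.
Proof.
move=> /(ginvariant_span (@scale1r _ _)) span_s.
rewrite /F /prQ (gsubmodule_dsproj_eq0 (@scaleN1r _ _) _ subQ spanS span_s) scale0r.
by have [pi_add _ _] := pi_gmorphism; apply: additive0.
Qed.

Lemma complement_scale_invariant_mem (q : S) :
  gsemisimple ( *:%R : A -> S -> S) phi -> gsemisimple (@ascale k A S M) rho ->
  Q q -> M1 (q *: m).
Proof.
move=> [IS [W [simW dsW]]] [IM [U [simU dsU]]] Qq.
have [F_add _ _] := F_gmorphism.
have Fq0 : F q = 0.
  have [_ _ /(_ q) [s [h [_ Wh Eq]]] _] := dsW.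
  rewrite Eq (additive_sum F_add) big1_seq // => i /andP[_ si].
  have := gmorphism_simple_span_invariants_eq0 (@ascaleDr _ _ _ _) (gm_add gmodM) dsU
    (simW i) simU F_gmorphism (fun y _ => F_span y) (fun y _ => F_invariant (s:=y)).
  by apply; apply: Wh.
have Fq : F q = dsproj MM1 (q *: m).
  by rewrite /F /prQ (gsubmodule_dsproj_id (@scaleN1r _ _) _ subQ spanS Qq).
have [_] := dsprojP MM1 (q *: m).
by rewrite -Fq Fq0 subr0.
Qed.

End ComplementTimesInvariant.

Theorem mainTheorem3 (k : comPzRingType) (A : comAlgType k) (g : lmodType A)
  (br : g -> g -> g) (alpha : g -> A -> A)
  (S : comAlgType A) (Sdeg : nat -> S -> Prop) (phi : g -> S -> S)
  (M : lmodType S) (Mdeg : int -> M -> Prop) (rho : g -> M -> M)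
  (Q : S -> Prop) (M1 : M -> Prop) :
  lie_algebroid br alpha ->
  graded_galgebra br alpha Sdeg phi ->
  noetherian_on (fun _ : S => True) ->
  gsemisimple ( *:%R : A -> S -> S) phi ->
  noetherian_on (fun s : S => Sdeg 0%N s /\ ginvariant phi s) ->
  graded_gmodule br alpha Sdeg phi Mdeg rho ->
  finite_type ( *:%R : S -> M -> M) ->
  gsemisimple (@ascale k A S M) rho ->
  gsubmodule ( *:%R : A -> S -> S) phi Q ->
  direct_sum2 (span_invariants ( *:%R : A -> S -> S) phi) Q ->
  gsubmodule (@ascale k A S M) rho M1 ->
  direct_sum2 (span_invariants (@ascale k A S M) rho) M1 ->
  forall (q : S) (m : M), Q q -> ginvariant rho m -> M1 (q *: m).
Proof.
move=> _ HS _ ssS _ HM _ ssM subQ SQ subM1 MM1 q m Qq inv_m.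
exact (complement_scale_invariant_mem (ga_gmod HS) (gmm_gmod HM) (gmm_leibniz HM)
  subQ SQ subM1 MM1 inv_m ssS ssM Qq).
Qed.
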